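(* Let $F$ be a PLSEM-function and $\sigma$ a permutation of $\{1,\dots,p\}$. For $x\in\mathbb{R}^p$ let $\Pi^\sigma_{i+1}(x)$ be the orthogonal projection onto $\mathrm{span}\{\partial_{\sigma^{-1}(i+1)}F(x),\dots,\partial_{\sigma^{-1}(p)}F(x)\}$ for $i<p$ and $\Pi^\sigma_{p+1}:=0$. If $(\mathrm{Id}-\Pi^\sigma_{i+1}(x))\,\partial^2_{\sigma^{-1}(i)}F(x)=0$ for all $x\in\mathbb{R}^p$ and $i=1,\dots,p$, then the matrices $\Pi^\sigma_{i+1}(x)$ and the vectors $(\mathrm{Id}-\Pi^\sigma_{i+1}(x))\,\partial_{\sigma^{-1}(i)}F(x)$ do not depend on $x$, for $i=1,\dots,p$.
   Context: A PLSEM with DAG $D$ on $\{1,\dots,p\}$ is a system $X_j=\mu_j+\sum_{i\in\mathrm{pa}_D(j)} f_{j,i}(X_i)+\varepsilon_j$, $j=1,\dots,p$, where $\mu_j\in\mathbb{R}$, $f_{j,i}\in C^2(\mathbb{R})$, $f_{j,i}\not\equiv 0$, $\mathbb{E}[f_{j,i}(X_i)]=0$, and $\varepsilon_1,\dots,\varepsilon_p$ are mutually independent with $\varepsilon_j\sim\mathcal{N}(0,\sigma_j^2)$, $\sigma_j^2>0$. Its PLSEM-function is $F(x)_j=\frac{1}{\sigma_j}\big(x_j-\mu_j-\sum_{i\in\mathrm{pa}_D(j)}f_{j,i}(x_i)\big)$. $\partial_kF$, $\partial_k^2F$ denote the vectors of first and second partial derivatives of the components of $F$ in $x_k$. *)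

(* classical reals. Indices are 0-based: 0..p-1. *)
From Stdlib Require Import Reals List Arith.
From Stdlib Require Import Relations.Relation_Operators.
Open Scope R_scope.

Definition sumR (n : nat) (g : nat -> R) : R :=
  fold_right Rplus 0 (map g (seq 0 n)).

(* vectors of R^p : nat -> R (only indices < p matter);
   p x p matrices : nat -> nat -> R *)
Definition mat_app (p : nat) (P : nat -> nat -> R) (v : nat -> R) : nat -> R :=
  fun j => sumR p (fun k => P j k * v k).

Definition dotp (p : nat) (v w : nat -> R) : R := sumR p (fun j => v j * w j).

Definition in_span (p : nat) (mem : nat -> bool) (u : nat -> nat -> R)
  (v : nat -> R) : Prop :=
  exists c : nat -> R, forall j, (j < p)%nat ->
    v j = sumR p (fun l => if mem l then c l * u l j else 0).

Definition is_orth_proj (p : nat) (mem : nat -> bool) (u : nat -> nat -> R)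
  (P : nat -> nat -> R) : Prop :=
  forall v : nat -> R,
    in_span p mem u (mat_app p P v) /\
    (forall l, (l < p)%nat -> mem l = true ->
       dotp p (fun j => v j - mat_app p P v j) (u l) = 0).

(* directed graph on {0..p-1}: pa j i = true iff i is a parent of j *)
Definition is_DAG (p : nat) (pa : nat -> nat -> bool) : Prop :=
  (forall j i, pa j i = true -> (i < p)%nat /\ (j < p)%nat) /\
  (forall i, ~ clos_trans nat (fun a b => pa b a = true) i i).

Definition C2 (g : R -> R) : Prop :=
  exists g1 g2 : R -> R,
    (forall t, derivable_pt_lim g t (g1 t)) /\
    (forall t, derivable_pt_lim g1 t (g2 t)) /\
    continuity g2.

(* The PLSEM-function F(x)_j = (x_j - mu_j - sum_{i in pa(j)} f_{j,i}(x_i)) / s_j,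
   where s_j = sigma_j is the noise standard deviation. *)
Definition plsem_F (p : nat) (pa : nat -> nat -> bool) (mu s : nat -> R)
  (f : nat -> nat -> R -> R) (x : nat -> R) : nat -> R :=
  fun j => (x j - mu j - sumR p (fun i => if pa j i then f j i (x i) else 0)) / s j.

Definition plsem_params (p : nat) (pa : nat -> nat -> bool) (mu s : nat -> R)
  (f : nat -> nat -> R -> R) : Prop :=
  is_DAG p pa /\
  (forall j, (j < p)%nat -> 0 < s j) /\
  (forall j i, pa j i = true -> C2 (f j i) /\ exists t, f j i t <> 0).

Definition upd (x : nat -> R) (k : nat) (t : R) : nat -> R :=
  fun m => if Nat.eqb m k then t else x m.

Definition is_partial (p : nat) (G : (nat -> R) -> nat -> R)
  (dG : nat -> (nat -> R) -> nat -> R) : Prop :=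
  forall k x j, (k < p)%nat -> (j < p)%nat ->
    derivable_pt_lim (fun t => G (upd x k t) j) (x k) (dG k x j).

Definition is_perm_with_inv (p : nat) (sigma sigma_inv : nat -> nat) : Prop :=
  forall i, (i < p)%nat ->
    (sigma i < p)%nat /\ (sigma_inv i < p)%nat /\
    sigma (sigma_inv i) = i /\ sigma_inv (sigma i) = i.

Definition is_second_partial (p : nat) (dG d2G : nat -> (nat -> R) -> nat -> R) : Prop :=
  forall k x j, (k < p)%nat -> (j < p)%nat ->
    derivable_pt_lim (fun t => dG k (upd x k t) j) (x k) (d2G k x j).

From Stdlib Require Import Reals List Arith Lra Lia FunctionalExtensionality IndefiniteDescription.
Open Scope R_scope.

(* Since F(x)_j is a sum of functions of single coordinates, the partial derivative
   dF k x depends on x k only.  Argue by downward induction on i.  If the projection Pi i is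
   constant, then on every line in direction k = sigma_inv i the residual
   (Id - Pi i) dF k has derivative (Id - Pi i) d2F k = 0, so it is constant on the line and
   hence everywhere.  If Pi (i+1) and the residual at i+1 are constant, then every generator
   dF l x, l > i, lies in the span of the dF l y, l > i, for any other point y: for l > i+1
   because dF l x = Pi (i+1) x (dF l x) = Pi (i+1) y (dF l x), for l = i+1 because
   dF l x = (residual at y) + Pi (i+1) y (dF l x).  So the subspace onto which Pi i projects,
   and with it Pi i, does not depend on x. *)

Lemma fold_right_Rplus_acc (l : list R) (a : R) :
  fold_right Rplus a l = fold_right Rplus 0 l + a.
Proof. induction l as [|b l IH]; simpl; [ring | rewrite IH; ring]. Qed.

Lemma sumR_S n g : sumR (S n) g = sumR n g + g n.
Proof.
  unfold sumR. rewrite seq_S, map_app, fold_right_app. simpl.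
  rewrite fold_right_Rplus_acc. ring.
Qed.

Lemma sumR_ext n g h : (forall k, (k < n)%nat -> g k = h k) -> sumR n g = sumR n h.
Proof.
  induction n as [|n IH]; intros H; [reflexivity|].
  rewrite !sumR_S, IH by (intros; apply H; lia).
  rewrite H by lia. reflexivity.
Qed.

Lemma sumR_add n g h : sumR n (fun k => g k + h k) = sumR n g + sumR n h.
Proof.
  induction n as [|n IH]; [unfold sumR; simpl; ring|].
  rewrite !sumR_S, IH. ring.
Qed.

Lemma sumR_sub n g h : sumR n (fun k => g k - h k) = sumR n g - sumR n h.
Proof.
  induction n as [|n IH]; [unfold sumR; simpl; ring|].
  rewrite !sumR_S, IH. ring.
Qed.

Lemma sumR_mult_l n c g : c * sumR n g = sumR n (fun k => c * g k).
Proof.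
  induction n as [|n IH]; [unfold sumR; simpl; ring|].
  rewrite !sumR_S, <- IH. ring.
Qed.

Lemma sumR_eq0 n g : (forall k, (k < n)%nat -> g k = 0) -> sumR n g = 0.
Proof.
  induction n as [|n IH]; intros H; [reflexivity|].
  rewrite sumR_S, IH by (intros; apply H; lia).
  rewrite H by lia. ring.
Qed.

Lemma sumR_swap n m h :
  sumR n (fun a => sumR m (fun b => h a b)) = sumR m (fun b => sumR n (fun a => h a b)).
Proof.
  induction n as [|n IH].
  - symmetry. apply sumR_eq0. reflexivity.
  - rewrite sumR_S, IH, <- sumR_add. apply sumR_ext. intros. rewrite sumR_S. reflexivity.
Qed.

Lemma sumR_delta n g b : (b < n)%nat ->
  sumR n (fun k => g k * (if Nat.eqb k b then 1 else 0)) = g b.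
Proof.
  induction n as [|n IH]; intros Hb; [lia|].
  rewrite sumR_S. destruct (Nat.eq_dec b n) as [->|Hne].
  - rewrite Nat.eqb_refl, sumR_eq0; [ring|].
    intros k Hk. destruct (Nat.eqb_spec k n); [lia | ring].
  - rewrite IH by lia. destruct (Nat.eqb_spec n b); [lia | ring].
Qed.

Lemma sumR_ge0 n g : (forall k, (k < n)%nat -> 0 <= g k) -> 0 <= sumR n g.
Proof.
  induction n as [|n IH]; intros H; [unfold sumR; simpl; lra|].
  rewrite sumR_S.
  assert (0 <= sumR n g) by (apply IH; intros; apply H; lia).
  assert (0 <= g n) by (apply H; lia). lra.
Qed.

Lemma sumR_ge0_eq0 n g : (forall k, (k < n)%nat -> 0 <= g k) -> sumR n g = 0 ->
  forall k, (k < n)%nat -> g k = 0.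
Proof.
  induction n as [|n IH]; intros H Hs k Hk; [lia|].
  rewrite sumR_S in Hs.
  assert (0 <= sumR n g) by (apply sumR_ge0; intros; apply H; lia).
  assert (0 <= g n) by (apply H; lia).
  destruct (Nat.eq_dec k n) as [->|Hne]; [lra|].
  apply IH; [intros; apply H; lia | lra | lia].
Qed.

Lemma dotp_ext p v v' w : (forall j, (j < p)%nat -> v j = v' j) -> dotp p v w = dotp p v' w.
Proof. intros H. apply sumR_ext. intros. rewrite H; auto. Qed.

Lemma dotp_sub p v v' w : dotp p (fun j => v j - v' j) w = dotp p v w - dotp p v' w.
Proof. unfold dotp. rewrite <- sumR_sub. apply sumR_ext. intros; ring. Qed.

Lemma dotp_self_eq0 p v : dotp p v v = 0 -> forall j, (j < p)%nat -> v j = 0.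
Proof.
  intros H j Hj.
  assert (E : v j * v j = 0).
  { apply (sumR_ge0_eq0 p (fun j => v j * v j)); auto. intros; apply Rle_0_sqr. }
  destruct (Rmult_integral _ _ E); auto.
Qed.

Lemma mat_app_ext p P Q v w j :
  (forall a b, (a < p)%nat -> (b < p)%nat -> P a b = Q a b) ->
  (forall k, (k < p)%nat -> v k = w k) -> (j < p)%nat ->
  mat_app p P v j = mat_app p Q w j.
Proof. intros HPQ Hvw Hj. apply sumR_ext. intros. rewrite HPQ, Hvw by auto. reflexivity. Qed.

Lemma mat_eq_of_mat_app_eq p P Q :
  (forall v j, (j < p)%nat -> mat_app p P v j = mat_app p Q v j) ->
  forall a b, (a < p)%nat -> (b < p)%nat -> P a b = Q a b.
Proof.
  intros H a b Ha Hb. specialize (H (fun k => if Nat.eqb k b then 1 else 0) a Ha).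
  unfold mat_app in H. rewrite !sumR_delta in H by auto. exact H.
Qed.

Lemma in_span_ext p mem u v w : (forall j, (j < p)%nat -> v j = w j) ->
  in_span p mem u w -> in_span p mem u v.
Proof. intros H [c Hc]. exists c. intros j Hj. rewrite H by auto. auto. Qed.

Lemma in_span_generator p mem u l : (l < p)%nat -> mem l = true -> in_span p mem u (u l).
Proof.
  intros Hl Hm. exists (fun m => if Nat.eqb m l then 1 else 0). intros j Hj.
  transitivity (sumR p (fun m => (if mem m then u m j else 0) * (if Nat.eqb m l then 1 else 0))).
  - rewrite sumR_delta, Hm by auto. reflexivity.
  - apply sumR_ext. intros. destruct (mem k), (Nat.eqb k l); ring.
Qed.

Lemma in_span_add p mem u v w : in_span p mem u v -> in_span p mem u w ->
  in_span p mem u (fun j => v j + w j).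
Proof.
  intros [c Hc] [d Hd]. exists (fun l => c l + d l). intros j Hj.
  rewrite Hc, Hd, <- sumR_add by auto. apply sumR_ext. intros. destruct (mem k); ring.
Qed.

Lemma in_span_sub p mem u v w : in_span p mem u v -> in_span p mem u w ->
  in_span p mem u (fun j => v j - w j).
Proof.
  intros [c Hc] [d Hd]. exists (fun l => c l - d l). intros j Hj.
  rewrite Hc, Hd, <- sumR_sub by auto. apply sumR_ext. intros. destruct (mem k); ring.
Qed.

Definition span_incl (p : nat) (mem : nat -> bool) (u : nat -> nat -> R)
  (mem' : nat -> bool) (u' : nat -> nat -> R) : Prop :=
  forall l, (l < p)%nat -> mem l = true -> in_span p mem' u' (u l).

Lemma in_span_trans p mem u mem' u' v :
  span_incl p mem u mem' u' -> in_span p mem u v -> in_span p mem' u' v.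
Proof.
  intros H [c Hc].
  destruct (functional_choice (fun l d => (l < p)%nat -> mem l = true ->
     forall j, (j < p)%nat -> u l j = sumR p (fun m => if mem' m then d m * u' m j else 0)))
    as [D HD].
  { intros l. destruct (lt_dec l p) as [Hl|Hl]; [destruct (mem l) eqn:Hm|].
    - destruct (H l Hl Hm) as [d Hd]. exists d. auto.
    - exists (fun _ => 0). discriminate.
    - exists (fun _ => 0). intros; lia. }
  exists (fun m => sumR p (fun l => if mem l then c l * D l m else 0)).
  intros j Hj. rewrite Hc by auto.
  transitivity (sumR p (fun l => sumR p (fun m =>
     if mem l then c l * (if mem' m then D l m * u' m j else 0) else 0))).
  - apply sumR_ext. intros l Hl. destruct (mem l) eqn:Hm.
    + rewrite (HD l Hl Hm j Hj). apply sumR_mult_l.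
    + symmetry. apply sumR_eq0. auto.
  - rewrite sumR_swap. apply sumR_ext. intros m _. destruct (mem' m).
    + rewrite Rmult_comm, sumR_mult_l. apply sumR_ext. intros l _. destruct (mem l); ring.
    + apply sumR_eq0. intros l _. destruct (mem l); ring.
Qed.

Lemma in_span_mono p mem mem' u v :
  (forall l, (l < p)%nat -> mem l = true -> mem' l = true) ->
  in_span p mem u v -> in_span p mem' u v.
Proof. intros H. apply in_span_trans. intros l Hl Hm. apply in_span_generator; auto. Qed.

Lemma dotp_span_eq0 p mem u w v :
  (forall l, (l < p)%nat -> mem l = true -> dotp p w (u l) = 0) ->
  in_span p mem u v -> dotp p w v = 0.
Proof.
  intros H [c Hc].
  transitivity (sumR p (fun j => sumR p (fun l => w j * (if mem l then c l * u l j else 0)))).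
  - apply sumR_ext. intros j Hj. rewrite Hc by auto. apply sumR_mult_l.
  - rewrite sumR_swap. apply sumR_eq0. intros l Hl. destruct (mem l) eqn:Hm.
    + transitivity (c l * dotp p w (u l)).
      * unfold dotp. rewrite sumR_mult_l. apply sumR_ext. intros; ring.
      * rewrite H by auto. ring.
    + apply sumR_eq0. intros; ring.
Qed.

Lemma orth_proj_id p mem u P v : is_orth_proj p mem u P -> in_span p mem u v ->
  forall j, (j < p)%nat -> mat_app p P v j = v j.
Proof.
  intros HP Hv j Hj. destruct (HP v) as [Hs Ho].
  assert (E : dotp p (fun j => v j - mat_app p P v j) (fun j => v j - mat_app p P v j) = 0).
  { apply (dotp_span_eq0 p mem u); [exact Ho | apply in_span_sub; auto]. }
  pose proof (dotp_self_eq0 p _ E j Hj). lra.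
Qed.

(* P v - Q v lies in the subspace and, by the two orthogonality conditions, is orthogonal to it. *)
Lemma orth_proj_eq p mem u u' P Q :
  is_orth_proj p mem u P -> is_orth_proj p mem u' Q ->
  span_incl p mem u' mem u -> span_incl p mem u mem u' ->
  forall a b, (a < p)%nat -> (b < p)%nat -> P a b = Q a b.
Proof.
  intros HP HQ Hu'u Huu'. apply mat_eq_of_mat_app_eq. intros v j Hj.
  destruct (HP v) as [HsP HoP], (HQ v) as [HsQ HoQ].
  set (d := fun j => mat_app p P v j - mat_app p Q v j).
  assert (E : dotp p d d = 0).
  { apply (dotp_span_eq0 p mem u).
    - intros l Hl Hm.
      rewrite (dotp_ext p d (fun j => (v j - mat_app p Q v j) - (v j - mat_app p P v j)))
        by (intros; unfold d; ring).
      rewrite dotp_sub, HoP, (dotp_span_eq0 p mem u' _ (u l)); auto. ring.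
    - apply in_span_sub; [|apply (in_span_trans p mem u')]; auto. }
  pose proof (dotp_self_eq0 p d E j Hj). unfold d in *. lra.
Qed.

Lemma upd_eq x k t : upd x k t k = t.
Proof. unfold upd. rewrite Nat.eqb_refl. reflexivity. Qed.

Lemma upd_upd x k t t' : upd (upd x k t) k t' = upd x k t'.
Proof. apply functional_extensionality. intros m. unfold upd. destruct (Nat.eqb m k); reflexivity. Qed.

Lemma upd_id x k : upd x k (x k) = x.
Proof.
  apply functional_extensionality. intros m. unfold upd.
  destruct (Nat.eqb_spec m k); subst; reflexivity.
Qed.

Lemma derivable_pt_lim_sumR n (h : nat -> R -> R) (h' : nat -> R) t0 :
  (forall b, (b < n)%nat -> derivable_pt_lim (h b) t0 (h' b)) ->
  derivable_pt_lim (fun t => sumR n (fun b => h b t)) t0 (sumR n h').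
Proof.
  induction n as [|n IH]; intros H.
  - exact (derivable_pt_lim_const 0 t0).
  - replace (fun t => sumR (S n) (fun b => h b t))
      with (plus_fct (fun t => sumR n (fun b => h b t)) (h n)).
    + rewrite sumR_S. apply derivable_pt_lim_plus; [apply IH; intros |]; apply H; lia.
    + apply functional_extensionality. intros t. unfold plus_fct. rewrite sumR_S. reflexivity.
Qed.

Lemma derivable_pt_lim_mat_app p P (v : R -> nat -> R) w j t0 :
  (forall b, (b < p)%nat -> derivable_pt_lim (fun t => v t b) t0 (w b)) ->
  derivable_pt_lim (fun t => mat_app p P (v t) j) t0 (mat_app p P w j).
Proof.
  intros H. apply (derivable_pt_lim_sumR p (fun b t => P j b * v t b)).
  intros b Hb. apply (derivable_pt_lim_scal (fun t => v t b)). auto.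
Qed.

Lemma derivable_pt_lim_0_const g : (forall t, derivable_pt_lim g t 0) -> forall a b, g a = g b.
Proof. intros Hg. apply (null_derivative_1 g (fun t => exist _ 0 (Hg t))). reflexivity. Qed.

Lemma residual_constant p P (v w : R -> nat -> R) :
  (forall t b, (b < p)%nat -> derivable_pt_lim (fun u => v u b) t (w t b)) ->
  (forall t j, (j < p)%nat -> w t j - mat_app p P (w t) j = 0) ->
  forall t t' j, (j < p)%nat ->
    v t j - mat_app p P (v t) j = v t' j - mat_app p P (v t') j.
Proof.
  intros Hv Hw t t' j Hj.
  apply (derivable_pt_lim_0_const (fun u => v u j - mat_app p P (v u) j)). intros u.
  rewrite <- (Hw u j Hj).
  apply (derivable_pt_lim_minus (fun u => v u j)); [|apply derivable_pt_lim_mat_app]; auto.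
Qed.

Lemma second_partial_on_line p dG d2G : is_second_partial p dG d2G ->
  forall k y t b, (k < p)%nat -> (b < p)%nat ->
    derivable_pt_lim (fun u => dG k (upd y k u) b) t (d2G k (upd y k t) b).
Proof.
  intros H k y t b Hk Hb. pose proof (H k (upd y k t) b Hk Hb) as D.
  rewrite upd_eq in D.
  replace (fun u => dG k (upd (upd y k t) k u) b) with (fun u => dG k (upd y k u) b) in D;
    [exact D|].
  apply functional_extensionality. intros u. rewrite upd_upd. reflexivity.
Qed.

(* For every k, each G j is the sum of a function of x k and a function of the other coordinates. *)
Definition coord_separable (G : (nat -> R) -> nat -> R) : Prop :=
  forall x y k j t, G (upd x k t) j - G (upd y k t) j = G (upd x k 0) j - G (upd y k 0) j.

Lemma plsem_F_coord_separable p pa mu s f : coord_separable (plsem_F p pa mu s f).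
Proof.
  intros x y k j t. unfold plsem_F.
  set (sum_pa z := sumR p (fun i => if pa j i then f j i (z i) else 0)).
  assert (Esum : sum_pa (upd x k t) - sum_pa (upd y k t) = sum_pa (upd x k 0) - sum_pa (upd y k 0)).
  { unfold sum_pa. rewrite <- !sumR_sub. apply sumR_ext. intros i _.
    unfold upd. destruct (Nat.eqb i k), (pa j i); ring. }
  assert (Ecoord : upd x k t j - upd y k t j = upd x k 0 j - upd y k 0 j).
  { unfold upd. destruct (Nat.eqb j k); ring. }
  change (sumR p (fun i => if pa j i then f j i (upd ?z k ?u i) else 0)) with (sum_pa (upd z k u)).
  unfold Rdiv.
  transitivity ((upd x k t j - upd y k t j - (sum_pa (upd x k t) - sum_pa (upd y k t))) * / s j); [ring|].
  rewrite Esum, Ecoord. ring.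
Qed.

Lemma partial_coord_local p G dG : is_partial p G dG -> coord_separable G ->
  forall k x y j, (k < p)%nat -> (j < p)%nat -> x k = y k -> dG k x j = dG k y j.
Proof.
  intros HdG Hsep k x y j Hk Hj Exy.
  set (c := G (upd x k 0) j - G (upd y k 0) j).
  assert (Hline : (fun t => G (upd x k t) j) = plus_fct (fun t => G (upd y k t) j) (fct_cte c)).
  { apply functional_extensionality. intros t. unfold plus_fct, fct_cte, c.
    rewrite <- (Hsep x y k j t). ring. }
  apply (uniqueness_limite (fun t => G (upd x k t) j) (x k)); [apply HdG; auto|].
  rewrite Hline, Exy, <- (Rplus_0_r (dG k y j)).
  apply derivable_pt_lim_plus; [apply HdG; auto | apply derivable_pt_lim_const].
Qed.

Section ProjectionsConstant.

Variables (p : nat) (G : (nat -> R) -> nat -> R) (dG d2G : nat -> (nat -> R) -> nat -> R)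
  (ord : nat -> nat) (Pi : nat -> (nat -> R) -> nat -> nat -> R).

Hypothesis G_separable : coord_separable G.
Hypothesis ord_lt : forall i, (i < p)%nat -> (ord i < p)%nat.
Hypothesis dG_partial : is_partial p G dG.
Hypothesis d2G_partial : is_second_partial p dG d2G.
Hypothesis Pi_orth_proj : forall i x, (i < p)%nat ->
  is_orth_proj p (fun l => Nat.ltb i l) (fun l => dG (ord l) x) (Pi i x).
Hypothesis d2G_in_range : forall x i j, (i < p)%nat -> (j < p)%nat ->
  d2G (ord i) x j - mat_app p (Pi i x) (d2G (ord i) x) j = 0.

Definition proj_const (i : nat) : Prop :=
  forall x y a b, (a < p)%nat -> (b < p)%nat -> Pi i x a b = Pi i y a b.

Definition residual_const (i : nat) : Prop :=
  forall x y j, (j < p)%nat ->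
    dG (ord i) x j - mat_app p (Pi i x) (dG (ord i) x) j =
    dG (ord i) y j - mat_app p (Pi i y) (dG (ord i) y) j.

Lemma residual_const_of_proj_const i : (i < p)%nat -> proj_const i -> residual_const i.
Proof.
  intros Hi HPi x y j Hj. set (k := ord i).
  assert (Hk : (k < p)%nat) by (apply ord_lt; auto).
  assert (Hx : forall b, (b < p)%nat -> dG k x b = dG k (upd y k (x k)) b).
  { intros b Hb. apply (partial_coord_local p G); auto. rewrite upd_eq. reflexivity. }
  transitivity (dG k (upd y k (x k)) j - mat_app p (Pi i y) (dG k (upd y k (x k))) j).
  - rewrite Hx by auto. f_equal. apply mat_app_ext; auto.
  - transitivity (dG k (upd y k (y k)) j - mat_app p (Pi i y) (dG k (upd y k (y k))) j);
      [|rewrite upd_id; reflexivity].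
    apply (residual_constant p (Pi i y) (fun t => dG k (upd y k t))
             (fun t => d2G k (upd y k t))); auto.
    + intros t b Hb. apply (second_partial_on_line p); auto.
    + intros t b Hb. rewrite <- (d2G_in_range (upd y k t) i b Hi Hb).
      f_equal. apply mat_app_ext; auto.
Qed.

Lemma span_incl_step i : (S i < p)%nat -> proj_const (S i) -> residual_const (S i) ->
  forall x y, span_incl p (fun l => Nat.ltb i l) (fun l => dG (ord l) x)
                          (fun l => Nat.ltb i l) (fun l => dG (ord l) y).
Proof.
  unfold proj_const, residual_const.
  intros HSi HPi Hres x y l Hl Hm. apply Nat.ltb_lt in Hm.
  assert (Hrange : forall v, in_span p (fun l => Nat.ltb i l) (fun l => dG (ord l) y)
                                     (mat_app p (Pi (S i) y) v)).
  { intros v. apply (in_span_mono p (fun l => Nat.ltb (S i) l)).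
    - intros m _ E. apply Nat.ltb_lt in E. apply Nat.ltb_lt. lia.
    - apply Pi_orth_proj; auto. }
  destruct (Nat.eq_dec l (S i)) as [->|Hne].
  - apply (in_span_ext _ _ _ _ (fun j =>
      (dG (ord (S i)) y j - mat_app p (Pi (S i) y) (dG (ord (S i)) y) j)
      + mat_app p (Pi (S i) y) (dG (ord (S i)) x) j)).
    + intros j Hj. rewrite <- (Hres x y j Hj).
      rewrite (mat_app_ext p (Pi (S i) y) (Pi (S i) x) (dG (ord (S i)) x) (dG (ord (S i)) x))
        by auto.
      ring.
    + apply in_span_add; [apply in_span_sub|]; auto.
      apply (in_span_generator p _ (fun l => dG (ord l) y) (S i)); [auto | apply Nat.ltb_lt; lia].
  - apply (in_span_ext _ _ _ _ (mat_app p (Pi (S i) y) (dG (ord l) x))); [|auto].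
    intros j Hj.
    rewrite <- (mat_app_ext p (Pi (S i) x) (Pi (S i) y) (dG (ord l) x) (dG (ord l) x)) by auto.
    symmetry. apply (orth_proj_id p (fun l => Nat.ltb (S i) l) (fun l => dG (ord l) x)); auto.
    apply (in_span_generator p _ (fun l => dG (ord l) x) l); [auto | apply Nat.ltb_lt; lia].
Qed.

Lemma proj_const_of_span_incl i : (i < p)%nat ->
  (forall x y, span_incl p (fun l => Nat.ltb i l) (fun l => dG (ord l) x)
                           (fun l => Nat.ltb i l) (fun l => dG (ord l) y)) ->
  proj_const i.
Proof.
  intros Hi Hincl x y.
  apply (orth_proj_eq p (fun l => Nat.ltb i l) (fun l => dG (ord l) x) (fun l => dG (ord l) y));
    auto.
Qed.

Lemma proj_const_all i : (i < p)%nat -> proj_const i.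
Proof.
  revert i.
  assert (H : forall n i, (i + 1 + n = p)%nat -> proj_const i).
  { induction n as [|n IH]; intros i Hp; apply proj_const_of_span_incl; try lia.
    - intros x y l Hl Hm. apply Nat.ltb_lt in Hm. lia.
    - apply span_incl_step; [lia | apply IH; lia |].
      apply residual_const_of_proj_const; [lia | apply IH; lia]. }
  intros i Hi. apply (H (p - i - 1)%nat). lia.
Qed.

End ProjectionsConstant.

Theorem mainTheorem14
  (p : nat) (pa : nat -> nat -> bool) (mu s : nat -> R) (f : nat -> nat -> R -> R)
  (sigma sigma_inv : nat -> nat)
  (dF d2F : nat -> (nat -> R) -> nat -> R)
  (Pi : nat -> (nat -> R) -> nat -> nat -> R) :
  plsem_params p pa mu s f ->
  is_perm_with_inv p sigma sigma_inv ->
  is_partial p (plsem_F p pa mu s f) dF ->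
  is_second_partial p dF d2F ->
  (forall i x, (i < p)%nat ->
     is_orth_proj p (fun l => Nat.ltb i l) (fun l => dF (sigma_inv l) x) (Pi i x)) ->
  (forall x i j, (i < p)%nat -> (j < p)%nat ->
     d2F (sigma_inv i) x j - mat_app p (Pi i x) (d2F (sigma_inv i) x) j = 0) ->
  forall i, (i < p)%nat ->
    (forall x y a b, (a < p)%nat -> (b < p)%nat -> Pi i x a b = Pi i y a b) /\
    (forall x y j, (j < p)%nat ->
       dF (sigma_inv i) x j - mat_app p (Pi i x) (dF (sigma_inv i) x) j =
       dF (sigma_inv i) y j - mat_app p (Pi i y) (dF (sigma_inv i) y) j).
Proof.
  intros _ Hperm HdF Hd2F Hproj Hrange i Hi.
  pose proof (plsem_F_coord_separable p pa mu s f) as Hsep.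
  assert (Hord : forall i, (i < p)%nat -> (sigma_inv i < p)%nat) by (intros; apply Hperm; auto).
  assert (HPi : proj_const p Pi i) by (eapply proj_const_all; eauto).
  split; [exact HPi | eapply residual_const_of_proj_const; eauto].
Qed.
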